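(* Let $\mathcal G$ be a finite, connected, simple bipartite graph with $N_{\mathcal V}$ vertices and $N_{\mathcal E}$ edges, each edge identified with $[0,1]$, and let $\mathcal L$ be the self-adjoint operator on $L^2(\mathcal G)$ described in the context. For $\lambda\in\mathbb C$ let $E(\lambda)$ denote the eigenspace of $\mathcal L$ with eigenvalue $\lambda$. Then \[\dim E(n^2\pi^2)=N_{\mathcal E}-N_{\mathcal V}+2,\qquad n=1,2,\dots.\]
   Context: $L^2(\mathcal G)=\bigoplus_{e\in\mathcal E}L^2(e)$ with each $L^2(e)=L^2[0,1]$. The operator $\mathcal L$ acts by $-d^2/dx^2$ on each edge, with domain consisting of $f\in L^2(\mathcal G)$ that are continuous on $\mathcal G$, continuously differentiable on each edge with $f_e'$ absolutely continuous and $f''\in L^2(\mathcal G)$, and satisfying at every vertex $v$ the condition $\sum_{e\sim v}\partial_\nu f_e(v)=0$, where the sum is over edges incident on $v$ and $\partial_\nu$ is the derivative in the local coordinate identifying $e$ with $[0,1]$ and $v$ with $0$. *)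

From Stdlib Require Import Reals List.
From Coquelicot Require Import Coquelicot.
Import ListNotations.
Open Scope R_scope.

(* A finite graph: vertices are 0 .. nV-1, edges a list of pairs (u,w).
   Edge number e (e < length E) is identified with [0,1], with u <-> 0 and w <-> 1. *)
Definition edge_ok (nV : nat) (E : list (nat * nat)) : Prop :=
  forall e, (e < length E)%nat ->
    (fst (nth e E (0%nat,0%nat)) < nV)%nat /\ (snd (nth e E (0%nat,0%nat)) < nV)%nat.

Definition simple_graph (nV : nat) (E : list (nat * nat)) : Prop :=
  edge_ok nV E /\
  (forall e, (e < length E)%nat -> fst (nth e E (0%nat,0%nat)) <> snd (nth e E (0%nat,0%nat))) /\
  (forall e1 e2, (e1 < length E)%nat -> (e2 < length E)%nat -> e1 <> e2 ->
     let (a1, b1) := nth e1 E (0%nat,0%nat) in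
     let (a2, b2) := nth e2 E (0%nat,0%nat) in
     ~ ((a1 = a2 /\ b1 = b2) \/ (a1 = b2 /\ b1 = a2))).

Definition adjacent (E : list (nat * nat)) (u w : nat) : Prop :=
  In (u, w) E \/ In (w, u) E.

Inductive reach (E : list (nat * nat)) : nat -> nat -> Prop :=
  | reach_refl : forall u, reach E u u
  | reach_step : forall u v w, reach E u v -> adjacent E v w -> reach E u w.

Definition connected_graph (nV : nat) (E : list (nat * nat)) : Prop :=
  (0 < nV)%nat /\ forall u w, (u < nV)%nat -> (w < nV)%nat -> reach E u w.

Definition bipartite_graph (E : list (nat * nat)) : Prop :=
  exists col : nat -> bool, forall u w, In (u, w) E -> col u <> col w.

Definition src (E : list (nat * nat)) (e : nat) : nat := fst (nth e E (0%nat,0%nat)).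
Definition tgt (E : list (nat * nat)) (e : nat) : nat := snd (nth e E (0%nat,0%nat)).

Definition has_deriv (f : R -> C) (x : R) (l : C) : Prop :=
  @is_derive R_AbsRing C_R_NormedModule f x l.

Fixpoint Csum (n : nat) (g : nat -> C) : C :=
  match n with O => RtoC 0 | S m => Cplus (Csum m g) (g m) end.

(* F e is the component of the function on edge e (only its values on [0,1] matter).
   F is an eigenfunction of L with eigenvalue lam (or zero) iff F is in the domain of L
   (continuity at vertices, C^2 on each closed edge -- eigenfunctions of -d^2/dx^2
   are automatically smooth --, Kirchhoff condition) and L F = lam F. *)
Definition in_eigenspace (nV : nat) (E : list (nat * nat)) (lam : C)
    (F : nat -> R -> C) : Prop :=
  exists (phi : nat -> C) (dF : nat -> R -> C),
    (forall e, (e < length E)%nat ->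
       (forall x, 0 <= x <= 1 -> has_deriv (F e) x (dF e x)) /\
       (forall x, 0 <= x <= 1 -> has_deriv (dF e) x (Copp (Cmult lam (F e x)))) /\
       F e 0 = phi (src E e) /\ F e 1 = phi (tgt E e)) /\
    (forall v, (v < nV)%nat ->
       Csum (length E) (fun e =>
         Cplus (if Nat.eqb (src E e) v then dF e 0 else RtoC 0)
               (if Nat.eqb (tgt E e) v then Copp (dF e 1) else RtoC 0))
       = RtoC 0).

Definition lin_indep (E : list (nat * nat)) (k : nat) (Fs : nat -> nat -> R -> C) : Prop :=
  forall c : nat -> C,
    (forall e x, (e < length E)%nat -> 0 <= x <= 1 ->
        Csum k (fun i => Cmult (c i) (Fs i e x)) = RtoC 0) ->
    forall i, (i < k)%nat -> c i = RtoC 0.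

Definition eigenspace_dim (nV : nat) (E : list (nat * nat)) (lam : C) (d : nat) : Prop :=
  (exists Fs : nat -> nat -> R -> C,
      (forall i, (i < d)%nat -> in_eigenspace nV E lam (Fs i)) /\ lin_indep E d Fs) /\
  (forall Fs : nat -> nat -> R -> C,
      (forall i, (i < S d)%nat -> in_eigenspace nV E lam (Fs i)) -> ~ lin_indep E (S d) Fs).

(* Write the eigenvalue as k^2 with k = n pi, so that sin k = 0 and
   sigma := cos k = +-1.  On every edge an eigenfunction solves u'' = -k^2 u, hence is
   u(0) cos(kx) + u'(0) sin(kx)/k, and its value and slope at the far end are sigma times
   those at the near end.  An eigenfunction is therefore the same thing as a vector phi of
   vertex values with phi(tgt e) = sigma phi(src e) on every edge, together with a vector b
   of initial slopes satisfying Kirchhoff's condition.  In terms of the signed incidence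
   matrix M (entries [src e = v] - sigma [tgt e = v]) these say phi M^T = 0 and b M = 0.
   Since the graph is connected and bipartite, phi must be a multiple of the vector that is
   1 on one colour class and sigma on the other, so ker M^T has dimension 1, M has rank
   N_V - 1, and the slopes range over a space of dimension N_E - N_V + 1: in total
   N_E - N_V + 2. *)

From Stdlib Require Import Reals List Lra Lia IndefiniteDescription.
From Coquelicot Require Import Coquelicot.
From Corelib Require Import ssreflect ssrbool.
From HB Require Import structures.
From mathcomp Require all_boot all_algebra Rstruct zify ring.
Open Scope R_scope.

Lemma sin_INR_mul_PI (n : nat) : sin (INR n * PI) = 0.
Proof. by apply: sin_eq_0_1; exists (Z.of_nat n); rewrite INR_IZR_INZ. Qed.

Lemma sin_neq0 (t : R) : 0 < Rabs t < PI -> sin t <> 0.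
Proof.
case: (Rle_or_lt 0 t) => [t_ge0|t_lt0].
- by rewrite Rabs_pos_eq // => t_bd; have := sin_gt_0 t; lra.
- by rewrite Rabs_left // => t_bd; have := sin_lt_0_var t; lra.
Qed.

Lemma RtoC_cos_sqr k : sin k = 0 -> (RtoC (cos k) * RtoC (cos k))%C = 1.
Proof.
move=> sin_k; have := sin2_cos2 k; rewrite sin_k /Rsqr => cos_sqr.
by apply: injective_projections => /=; lra.
Qed.

(* The solution of u'' = -k^2 u with u 0 = a and u' 0 = b, provided k <> 0. *)
Definition harmonic (k : R) (a b : C) (x : R) : C :=
  (a * cos (k * x) + b * (sin (k * x) / k)%R)%C.

Lemma harmonic_0 k a b : harmonic k a b 0 = a.
Proof.
rewrite /harmonic Rmult_0_r cos_0 sin_0.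
by apply: injective_projections => /=; rewrite /Rdiv; ring.
Qed.

Lemma harmonic_1 k a b : sin k = 0 -> harmonic k a b 1 = (cos k * a)%C.
Proof.
move=> sin_k; rewrite /harmonic Rmult_1_r sin_k.
by apply: injective_projections => /=; rewrite /Rdiv; ring.
Qed.

Lemma harmonic_00 k x : harmonic k 0 0 x = 0.
Proof. by rewrite /harmonic; ring. Qed.

Lemma harmonic_decomp k a b x :
  harmonic k a b x = (a * harmonic k 1 0 x + b * harmonic k 0 1 x)%C.
Proof. by rewrite /harmonic; ring. Qed.

Lemma exists_harmonic_sine_neq0 (k : R) :
  k <> 0 -> exists x, 0 <= x <= 1 /\ harmonic k 0 1 x <> 0.
Proof.
move=> k_neq0; have PI_gt1 : 1 < PI by have := PI2_3_2; lra.
have k_pos : 0 < Rabs k by apply: Rabs_pos_lt.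
set x := / (2 * (Rabs k + 1)).
have x_pos : 0 < x by apply: Rinv_0_lt_compat; lra.
have x_le1 : x <= 1 by rewrite -Rinv_1; apply: Rinv_le_contravar; lra.
have kx_lt1 : Rabs k * x < 1.
  by apply: (Rmult_lt_reg_r (2 * (Rabs k + 1))); [lra | rewrite /x; field_simplify; lra].
have sin_kx : sin (k * x) <> 0.
  apply: sin_neq0; rewrite Rabs_mult (Rabs_pos_eq x); last lra.
  split; [exact: Rmult_lt_0_compat | lra].
exists x; split; first lra.
move=> /(f_equal fst) /=; rewrite /Rdiv => sin_div.
have /Rmult_integral [//|] : sin (k * x) * / k = 0 by lra.
exact: Rinv_neq_0_compat.
Qed.

Lemma C_plus_scal (r s : R) (a b : C) :
  @plus C_R_NormedModule (scal r a) (scal s b) = (a * r + b * s)%C.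
Proof.
apply: injective_projections;
  rewrite /= /plus /scal /= /prod_plus /prod_scal /= /plus /scal /mult /=; ring.
Qed.

Lemma harmonic_derive k a b x : k <> 0 ->
  has_deriv (harmonic k a b) x (harmonic k b (- (RtoC (k * k) * a)) x).
Proof.
move=> k_neq0.
have cos' : is_derive (fun y => cos (k * y)) x (- k * sin (k * x)) by auto_derive; [|ring].
have sin' : is_derive (fun y => sin (k * y) / k) x (cos (k * x)) by auto_derive; [|field].
apply: (is_derive_ext (fun y =>
  @plus C_R_NormedModule (scal (cos (k * y)) a) (scal (sin (k * y) / k) b))).
  by move=> y; rewrite C_plus_scal.
have -> : harmonic k b (- (RtoC (k * k) * a)) x =
    @plus C_R_NormedModule (scal (- k * sin (k * x)) a) (scal (cos (k * x)) b).
  by rewrite C_plus_scal; apply: injective_projections => /=; field.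
exact: is_derive_plus (@is_derive_scal_l _ C_R_NormedModule _ _ _ a cos')
                      (@is_derive_scal_l _ C_R_NormedModule _ _ _ b sin').
Qed.

Lemma harmonic_second_derive k a b x : k <> 0 ->
  has_deriv (harmonic k b (- (RtoC (k * k) * a))%C) x
    (- (RtoC (k * k) * harmonic k a b x))%C.
Proof.
move=> k_neq0; have := harmonic_derive k b (- (RtoC (k * k) * a))%C x k_neq0.
by congr has_deriv; rewrite /harmonic; ring.
Qed.

(* The energy dg^2 + k^2 g^2 has derivative zero. *)
Lemma harmonic_ode_zero (k : R) (g dg : R -> R) : k <> 0 ->
  (forall x, 0 <= x <= 1 -> is_derive g x (dg x)) ->
  (forall x, 0 <= x <= 1 -> is_derive dg x (- (k * k) * g x)) ->
  g 0 = 0 -> dg 0 = 0 -> forall x, 0 <= x <= 1 -> g x = 0 /\ dg x = 0.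
Proof.
move=> k_neq0 g' dg' g0 dg0 x x01.
pose energy t := dg t * dg t + k * k * (g t * g t).
have energy' t : 0 <= t <= 1 -> is_derive energy t 0.
  move=> t01; have dg2 := is_derive_mult _ _ _ _ _ (dg' t t01) (dg' t t01) Rmult_comm.
  have g2 := is_derive_mult _ _ _ _ _ (g' t t01) (g' t t01) Rmult_comm.
  have := is_derive_plus _ _ _ _ _ dg2 (is_derive_scal _ _ (k * k) _ g2).
  by congr is_derive; rewrite /plus /mult /=; ring.
have energy0 : energy 0 = 0 by rewrite /energy g0 dg0; ring.
have energy_x : energy x = 0.
  case: (Req_dec x 0) => [-> //|x_neq0].
  rewrite -[RHS]energy0; symmetry.
  by apply: eq_is_derive => [t t0x|]; [apply: energy'; lra | lra].
have kk_pos : 0 < k * k by nra.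
rewrite /energy in energy_x.
have g_sqr : g x * g x = 0 by nra.
have dg_sqr : dg x * dg x = 0 by nra.
by split; [case: (Rmult_integral _ _ g_sqr) | case: (Rmult_integral _ _ dg_sqr)].
Qed.

Lemma has_deriv_fst (f : R -> C) x l :
  has_deriv f x l -> is_derive (fun y => fst (f y)) x (fst l).
Proof. exact: (fun H => filterdiff_comp' f fst x _ fst H (filterdiff_linear _ is_linear_fst)). Qed.

Lemma has_deriv_snd (f : R -> C) x l :
  has_deriv f x l -> is_derive (fun y => snd (f y)) x (snd l).
Proof. exact: (fun H => filterdiff_comp' f snd x _ snd H (filterdiff_linear _ is_linear_snd)). Qed.

Lemma harmonic_ode_zeroC (k : R) (G dG : R -> C) : k <> 0 ->
  (forall x, 0 <= x <= 1 -> has_deriv G x (dG x)) ->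
  (forall x, 0 <= x <= 1 -> has_deriv dG x (- (RtoC (k * k) * G x))%C) ->
  G 0 = 0 -> dG 0 = 0 -> forall x, 0 <= x <= 1 -> G x = 0 /\ dG x = 0.
Proof.
move=> k_neq0 G' dG' G0 dG0 x x01.
have [re_G re_dG] : fst (G x) = 0 /\ fst (dG x) = 0.
  apply: (harmonic_ode_zero k (fun y => fst (G y)) (fun y => fst (dG y))) => //=;
    [move=> t t01; exact: has_deriv_fst (G' t t01)
    |move=> t t01; have := has_deriv_fst _ _ _ (dG' t t01); congr is_derive => /=; ring
    |by rewrite G0|by rewrite dG0].
have [im_G im_dG] : snd (G x) = 0 /\ snd (dG x) = 0.
  apply: (harmonic_ode_zero k (fun y => snd (G y)) (fun y => snd (dG y))) => //=;
    [move=> t t01; exact: has_deriv_snd (G' t t01)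
    |move=> t t01; have := has_deriv_snd _ _ _ (dG' t t01); congr is_derive => /=; ring
    |by rewrite G0|by rewrite dG0].
by split; apply: injective_projections.
Qed.

Lemma harmonic_ode_unique (k : R) (F dF : R -> C) : k <> 0 ->
  (forall x, 0 <= x <= 1 -> has_deriv F x (dF x)) ->
  (forall x, 0 <= x <= 1 -> has_deriv dF x (- (RtoC (k * k) * F x))%C) ->
  forall x, 0 <= x <= 1 ->
    F x = harmonic k (F 0) (dF 0) x /\
    dF x = harmonic k (dF 0) (- (RtoC (k * k) * F 0))%C x.
Proof.
move=> k_neq0 F' dF' x x01.
set h := harmonic k (F 0) (dF 0).
set dh := harmonic k (dF 0) (- (RtoC (k * k) * F 0))%C.
have h' y : has_deriv h y (dh y) by apply: harmonic_derive.
have dh' y : has_deriv dh y (- (RtoC (k * k) * h y))%C by apply: harmonic_second_derive.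
have [] : (F x - h x = 0 /\ dF x - dh x = 0)%C; last by split; apply/Ceq_minus.
apply: (harmonic_ode_zeroC k (fun y => F y - h y)%C (fun y => dF y - dh y)%C)
  => // [t t01|t t01||].
- exact: (@is_derive_minus _ C_R_NormedModule _ _ t _ _ (F' t t01) (h' t)).
- have := @is_derive_minus _ C_R_NormedModule _ _ t _ _ (dF' t t01) (dh' t).
  by congr has_deriv; apply: injective_projections; rewrite /= /plus /opp /=; ring.
- by rewrite /h harmonic_0; ring.
- by rewrite /dh harmonic_0; ring.
Qed.

Definition harmonic_profile (E : list (nat * nat)) (k : R) (F : nat -> R -> C)
    (phi b : nat -> C) : Prop :=
  forall e x, (e < length E)%nat -> 0 <= x <= 1 ->
    F e x = harmonic k (phi (src E e)) (b e) x.

Definition vertex_compatible (E : list (nat * nat)) (sigma : C) (phi : nat -> C) : Prop :=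
  forall e, (e < length E)%nat -> phi (tgt E e) = (sigma * phi (src E e))%C.

Definition kirchhoff_balanced (nV : nat) (E : list (nat * nat)) (sigma : C)
    (b : nat -> C) : Prop :=
  forall v, (v < nV)%nat ->
    Csum (length E) (fun e =>
      Cplus (if Nat.eqb (src E e) v then b e else RtoC 0)
            (if Nat.eqb (tgt E e) v then Copp (sigma * b e)%C else RtoC 0))
    = RtoC 0.

Lemma Csum_ext n (f g : nat -> C) :
  (forall i, (i < n)%nat -> f i = g i) -> Csum n f = Csum n g.
Proof. by elim: n => //= n IH fg; rewrite IH => [|i i_lt]; rewrite fg //; lia. Qed.

Lemma in_eigenspace_harmonic nV E k F : k <> 0 -> sin k = 0 ->
  in_eigenspace nV E (RtoC (k * k)) F ->
  exists phi b : nat -> C,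
    [/\ harmonic_profile E k F phi b,
        vertex_compatible E (cos k) phi & kirchhoff_balanced nV E (cos k) b].
Proof.
move=> k_neq0 sin_k [phi [dF [on_edges kirchhoff]]].
have wave e : (e < length E)%nat -> forall x, 0 <= x <= 1 ->
    F e x = harmonic k (phi (src E e)) (dF e 0) x /\
    dF e x = harmonic k (dF e 0) (- (RtoC (k * k) * phi (src E e)))%C x.
  move=> e_lt x x01; have [F' [dF' [F0 _]]] := on_edges e e_lt.
  by rewrite -F0; apply: harmonic_ode_unique.
have unit1 : 0 <= 1 <= 1 by lra.
exists phi, (fun e => dF e 0); split.
- by move=> e x e_lt x01; case: (wave e e_lt x x01).
- move=> e e_lt; have [_ [_ [_ F1]]] := on_edges e e_lt.
  by rewrite -F1 (proj1 (wave e e_lt 1 unit1)) harmonic_1.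
- move=> v v_lt; rewrite -[RHS](kirchhoff v v_lt); apply: Csum_ext => e e_lt.
  by rewrite (proj2 (wave e e_lt 1 unit1)) harmonic_1.
Qed.

Lemma harmonic_in_eigenspace nV E k (phi b : nat -> C) : k <> 0 -> sin k = 0 ->
  vertex_compatible E (cos k) phi -> kirchhoff_balanced nV E (cos k) b ->
  in_eigenspace nV E (RtoC (k * k)) (fun e => harmonic k (phi (src E e)) (b e)).
Proof.
move=> k_neq0 sin_k compatible kirchhoff.
exists phi, (fun e => harmonic k (b e) (- (RtoC (k * k) * phi (src E e)))%C); split.
- move=> e e_lt; split; [|split; [|split]].
  + by move=> x _; apply: harmonic_derive.
  + by move=> x _; apply: harmonic_second_derive.
  + exact: harmonic_0.
  + by rewrite harmonic_1 // compatible.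
- move=> v v_lt; rewrite -[RHS](kirchhoff v v_lt); apply: Csum_ext => e _.
  by rewrite harmonic_0 harmonic_1.
Qed.

Lemma reach_invariant {T : Type} (E : list (nat * nat)) (q : nat -> T) :
  (forall e, (e < length E)%nat -> q (src E e) = q (tgt E e)) ->
  forall u w, reach E u w -> q w = q u.
Proof.
move=> q_edge u w; elim=> // {}u v {}w _ IH [] /(In_nth _ _ (0%nat, 0%nat)) [e [e_lt E_e]];
  by rewrite -IH; move: (q_edge e e_lt); rewrite /src /tgt E_e.
Qed.

(* MathComp is imported only inside this section: its notations for [nat] would change the
   meaning of [<] and [-] in the statement of [theorem2p3] below. *)
Section IncidenceSpectrum.
Import all_boot all_algebra Rstruct zify ring GRing.Theory.
Set Implicit Arguments.
Unset Strict Implicit.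
Local Open Scope ring_scope.

(* Coquelicot's complex numbers as a MathComp field.  Ring operations must be typed at [CC]:
   at type [C = R * R] inference picks the componentwise product ring instead. *)
Definition CC : Type := C.
HB.instance Definition _ := Choice.copy CC (R * R)%type.
HB.instance Definition _ :=
  GRing.isZmodule.Build CC Cplus_assoc Cplus_comm Cplus_0_l
    (fun x => etrans (Cplus_comm _ x) (Cplus_opp_r x)).

Lemma CC_one_neq0 : (RtoC 1 : CC) != RtoC 0.
Proof. exact/eqP/C1_nz. Qed.

HB.instance Definition _ := GRing.Zmodule_isComNzRing.Build CC
  Cmult_assoc Cmult_comm Cmult_1_l Cmult_plus_distr_r CC_one_neq0.

Lemma Cinv0 : Cinv (0 : CC) = 0.
Proof. by apply: injective_projections; rewrite /= /Rdiv ?Rmult_0_l ?Ropp_0 ?Rmult_0_l. Qed.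

HB.instance Definition _ := GRing.ComNzRing_isField.Build CC
  (fun x (x_neq0 : x != 0) => Cinv_l x (elimN eqP x_neq0)) Cinv0.

Lemma CmultE (x y : C) : Cmult x y = (x : CC) * (y : CC).
Proof. by []. Qed.

Lemma Csum_big n (g : nat -> CC) : Csum n g = \sum_(i < n) g i.
Proof. by elim: n => [|n IH]; rewrite ?big_ord0 // big_ord_recr -IH. Qed.

Lemma Nat_eqbE (a b : nat) : Nat.eqb a b = (a == b).
Proof. by case: (PeanoNat.Nat.eqb_spec a b) => [->|/eqP/negbTE ->]; rewrite ?eqxx. Qed.

Lemma mxrank_row_mx_le (K : fieldType) m n1 n2 (A : 'M[K]_(m, n1)) (B : 'M[K]_(m, n2)) :
  (\rank (row_mx A B) <= \rank A + \rank B)%N.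
Proof.
rewrite -mxrank_tr tr_row_mx -[\rank A]mxrank_tr -[\rank B]mxrank_tr -addsmxE.
exact: mxrank_adds_leqif.
Qed.

Lemma rank_lt_left_kernel (K : fieldType) p q (A : 'M[K]_(p, q)) :
  (\rank A < p)%N -> exists2 c : 'rV_p, c != 0 & c *m A = 0.
Proof.
move=> rank_lt; have /rowV0Pn [c /sub_kermxP c_ker c_neq0] : kermx A != 0.
  by rewrite kermx_eq0 /row_free neq_ltn rank_lt.
by exists c.
Qed.

Definition mx_nth {K : zmodType} {p q : nat} (A : 'M[K]_(p, q)) (i j : nat) : K :=
  if insub i is Some i' then (if insub j is Some j' then A i' j' else 0) else 0.

Lemma mx_nthE {K : zmodType} {p q : nat} (A : 'M[K]_(p, q)) (i : 'I_p) (j : 'I_q) :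
  mx_nth A i j = A i j.
Proof. by rewrite /mx_nth !valK. Qed.

Lemma sum_mul_delta (K : nzRingType) n (f : nat -> K) s : (s < n)%N ->
  \sum_(v < n) f v * (s == v)%:R = f s.
Proof.
move=> s_lt; rewrite (eq_bigr (fun v : 'I_n => if v == s :> nat then f v else 0)) => [|v _].
  by rewrite -big_mkcond big_ord1_eq s_lt.
by rewrite eq_sym; case: eqP => _; rewrite ?mulr1 ?mulr0.
Qed.

Section Incidence.
Variables (K : fieldType) (nV : nat) (E : list (nat * nat)) (sigma : K).
Hypothesis edges : edge_ok nV E.

Lemma src_lt e : (e < length E)%N -> (src E e < nV)%N.
Proof. by move=> /ltP /edges [/ltP]. Qed.

Lemma tgt_lt e : (e < length E)%N -> (tgt E e < nV)%N.
Proof. by move=> /ltP /edges [_ /ltP]. Qed.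

(* For edge slopes [b], [b *m incidence = 0] is Kirchhoff's condition when the slope at the
   far end of each edge is [sigma] times the slope at the near end. *)
Definition incidence : 'M[K]_(length E, nV) :=
  \matrix_(e, v) ((src E e == v)%:R - sigma * (tgt E e == v)%:R).

Lemma row_mul_incidence_tr (phi : nat -> K) :
  (\row_(v < nV) phi v) *m incidence^T =
  \row_(e < length E) (phi (src E e) - sigma * phi (tgt E e)).
Proof.
apply/rowP => e; rewrite !mxE.
under eq_bigr => v _ do rewrite !mxE mulrBr mulrCA.
by rewrite sumrB -mulr_sumr !sum_mul_delta ?src_lt ?tgt_lt.
Qed.

Section Bipartite.
Variable col : nat -> bool.
Hypotheses (sigma_sqr : sigma * sigma = 1)
  (proper : forall u w, In (u, w) E -> col u <> col w)
  (nV_gt0 : (0 < nV)%N) (connected : forall w, (w < nV)%N -> reach E 0 w).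

Definition colour_sign (v : nat) : K := if col v then 1 else sigma.

Lemma colour_sign_sqr v : colour_sign v * colour_sign v = 1.
Proof. by rewrite /colour_sign; case: (col v); rewrite ?mulr1. Qed.

Lemma colour_sign_neq0 v : colour_sign v != 0.
Proof.
apply/eqP => sign0; have := colour_sign_sqr v.
by rewrite sign0 mul0r => /eqP; rewrite eq_sym oner_eq0.
Qed.

Lemma colour_sign_edge e :
  (e < length E)%N -> colour_sign (tgt E e) = sigma * colour_sign (src E e).
Proof.
move=> /ltP e_lt; have e_in : In (src E e, tgt E e) E.
  by rewrite /src /tgt -surjective_pairing; apply: nth_In.
move: (proper e_in); rewrite /colour_sign.
by case: (col (src E e)); case: (col (tgt E e)); rewrite ?mulr1.
Qed.

Lemma colour_sign_ker : (\row_(v < nV) colour_sign v) *m incidence^T = 0.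
Proof.
apply/rowP => e; rewrite row_mul_incidence_tr !mxE colour_sign_edge //.
by rewrite mulrA sigma_sqr mul1r subrr.
Qed.

(* [phi * colour_sign] is constant along edges, hence on the connected graph. *)
Lemma incidence_tr_ker (p : 'rV[K]_nV) : p *m incidence^T = 0 ->
  p = (mx_nth p 0 0 * colour_sign 0) *: \row_(v < nV) colour_sign v.
Proof.
pose phi v := mx_nth p 0 v.
have p_phi : p = \row_(v < nV) phi v.
  by apply/rowP => v; rewrite mxE /phi -[0%N]/(@ord0 0 : nat) mx_nthE.
move=> p_ker; have phi_edge e :
    (e < length E)%N -> phi (src E e) = sigma * phi (tgt E e).
  move=> e_lt; move/rowP: p_ker => /(_ (Ordinal e_lt)).
  by rewrite p_phi row_mul_incidence_tr !mxE => /eqP; rewrite subr_eq0 => /eqP.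
have q_edge e : (e < length E)%coq_nat ->
    phi (src E e) * colour_sign (src E e) = phi (tgt E e) * colour_sign (tgt E e).
  by move=> /ltP e_lt; rewrite phi_edge // colour_sign_edge //; ring.
apply/rowP => v; rewrite {1}p_phi !mxE.
have q_v : phi v * colour_sign v = phi 0 * colour_sign 0 :=
  reach_invariant E (fun v => phi v * colour_sign v) q_edge _ _ (connected (ltn_ord v)).
by rewrite -[phi v]mulr1 -(colour_sign_sqr v) mulrA q_v.
Qed.

Lemma kermx_incidence_tr : (kermx incidence^T == \row_(v < nV) colour_sign v)%MS.
Proof.
apply/andP; split; last by apply/sub_kermxP; exact: colour_sign_ker.
apply/row_subP => i; apply/sub_rVP; eexists; apply: incidence_tr_ker.
by rewrite -row_mul mulmx_ker row0.
Qed.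

Lemma rank_kermx_incidence_tr : \rank (kermx incidence^T) = 1%N.
Proof.
have sign_neq0 : \row_(v < nV) colour_sign v != 0.
  apply/eqP => /rowP /(_ (Ordinal nV_gt0)) /eqP.
  by rewrite !mxE (negbTE (colour_sign_neq0 0)).
by rewrite (eqmxP kermx_incidence_tr) rank_rV sign_neq0.
Qed.

Lemma rank_incidence : \rank incidence = nV.-1.
Proof.
have := mxrank_ker incidence^T; rewrite rank_kermx_incidence_tr mxrank_tr.
by have := rank_leq_col incidence; lia.
Qed.

Lemma vertices_le_edges_succ : (nV <= (length E).+1)%N.
Proof. by have := rank_leq_row incidence; rewrite rank_incidence; lia. Qed.

Lemma rank_kermx_incidence : \rank (kermx incidence) = ((length E).+1 - nV)%N.
Proof. by rewrite mxrank_ker rank_incidence; have := vertices_le_edges_succ; lia. Qed.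

End Bipartite.

End Incidence.

Lemma harmonicE (k : R) (a b : CC) (x : R) :
  harmonic k a b x = a * harmonic k (1 : CC) (0 : CC) x + b * harmonic k (0 : CC) (1 : CC) x.
Proof. exact: harmonic_decomp. Qed.

Lemma harmonic_sum (k : R) n (c a b : 'I_n -> CC) (x : R) :
  \sum_(i < n) c i * harmonic k (a i) (b i) x =
  harmonic k (\sum_(i < n) c i * a i) (\sum_(i < n) c i * b i) x.
Proof.
under eq_bigr => i _ do rewrite [harmonic _ (a i) _ _]harmonicE mulrDr !mulrA.
by rewrite [RHS]harmonicE big_split /= -!mulr_suml.
Qed.

Section Eigenspace.
Variables (nV : nat) (E : list (nat * nat)) (col : nat -> bool) (k : R).
Hypotheses (edges : edge_ok nV E) (proper : forall u w, In (u, w) E -> col u <> col w)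
  (nV_gt0 : (0 < nV)%N) (connected : forall w, (w < nV)%N -> reach E 0 w)
  (E_gt0 : (0 < length E)%N) (k_neq0 : k <> 0) (sin_k : sin k = 0).

Let sigma : CC := RtoC (cos k).
Let sigma_sqr : sigma * sigma = 1 := RtoC_cos_sqr k sin_k.
Let M := incidence nV E sigma.
Let r := \rank (kermx M).
Let B := row_base (kermx M).

Lemma vertex_compatible_ker (phi : nat -> CC) :
  vertex_compatible E (cos k) phi -> (\row_(v < nV) phi v) *m M^T = 0.
Proof.
move=> compatible; apply/rowP => e; rewrite row_mul_incidence_tr // !mxE.
rewrite (compatible e (elimT ltP (ltn_ord e)) : phi (tgt E e) = sigma * phi (src E e)).
by rewrite mulrA sigma_sqr mul1r subrr.
Qed.

Lemma kirchhoff_balanced_ker (b : nat -> CC) :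
  kirchhoff_balanced nV E (cos k) b <-> (\row_(e < length E) b e) *m M = 0.
Proof.
have entry (v : 'I_nV) : ((\row_(e < length E) b e) *m M) 0 v =
    Csum (length E) (fun e => (if Nat.eqb (src E e) v then b e else 0) +
                              (if Nat.eqb (tgt E e) v then - (sigma * b e) else 0)).
  rewrite Csum_big !mxE; apply: eq_bigr => e _; rewrite !mxE !Nat_eqbE.
  by case: (src E e == v); case: (tgt E e == v); rewrite /=; ring.
split=> [balanced | ker v /ltP v_lt].
- by apply/rowP => v; rewrite entry mxE; exact (balanced v (elimT ltP (ltn_ord v))).
- by have := entry (Ordinal v_lt); rewrite ker mxE => <-.
Qed.

Lemma harmonic_family_dependent d (Fs : nat -> nat -> R -> C) (phi b : nat -> nat -> CC) :
  (forall i, (i < d)%N -> harmonic_profile E k (Fs i) (phi i) (b i)) ->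
  (\rank (row_mx (\matrix_(i < d, v < nV) phi i v)
                 (\matrix_(i < d, e < length E) b i e)) < d)%N ->
  ~ lin_indep E d Fs.
Proof.
move=> profile /rank_lt_left_kernel [c c_neq0].
rewrite mul_mx_row -row_mx0 => /eq_row_mx [/rowP c_phi /rowP c_b] indep.
move/eqP: c_neq0; apply; apply/rowP => i; rewrite mxE -(mx_nthE c ord0 i).
apply: (indep (mx_nth c 0)); last exact/ltP.
move=> e x /[dup] /ltP e_lt e_lt' x01; rewrite Csum_big.
under eq_bigr => j _ do rewrite (profile j (ltn_ord j) e x e_lt' x01) (mx_nthE c ord0).
have sum_phi : \sum_(j < d) c 0 j * phi j (src E e) = 0.
  by move: (c_phi (Ordinal (src_lt edges e_lt))); rewrite !mxE; under eq_bigr do rewrite mxE.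
have sum_b : \sum_(j < d) c 0 j * b j e = 0.
  by move: (c_b (Ordinal e_lt)); rewrite !mxE; under eq_bigr do rewrite mxE.
by rewrite harmonic_sum sum_phi sum_b; exact: harmonic_00.
Qed.

Lemma eigenfunctions_dependent (Fs : nat -> nat -> R -> C) :
  (forall i, (i < r.+2)%coq_nat -> in_eigenspace nV E (RtoC (Rmult k k)) (Fs i)) ->
  ~ lin_indep E r.+2 Fs.
Proof.
move=> eigen.
have /functional_choice [data data_spec] : forall i, exists data : (nat -> CC) * (nat -> CC),
    (i < r.+2)%N -> [/\ harmonic_profile E k (Fs i) data.1 data.2,
      vertex_compatible E (cos k) data.1 & kirchhoff_balanced nV E (cos k) data.2].
  move=> i; case: (ltnP i r.+2) => [/ltP i_lt | _]; last by exists (fun _ => 0, fun _ => 0).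
  have [phi [b spec]] := in_eigenspace_harmonic _ _ _ _ k_neq0 sin_k (eigen i i_lt).
  by exists (phi, b).
pose Phi := \matrix_(i < r.+2, v < nV) (data i).1 v.
pose Slope := \matrix_(i < r.+2, e < length E) (data i).2 e.
have Phi_ker : Phi *m M^T = 0.
  apply/row_matrixP => i; rewrite row_mul row0 (_ : row i Phi = \row_v (data i).1 v).
    by apply: vertex_compatible_ker; case: (data_spec i (ltn_ord i)).
  by apply/rowP => v; rewrite !mxE.
have Slope_ker : Slope *m M = 0.
  apply/row_matrixP => i; rewrite row_mul row0 (_ : row i Slope = \row_e (data i).2 e).
    by apply/kirchhoff_balanced_ker; case: (data_spec i (ltn_ord i)).
  by apply/rowP => e; rewrite !mxE.
apply: (harmonic_family_dependent (phi := fun i => (data i).1) (b := fun i => (data i).2)).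
  by move=> i /data_spec [].
apply: (leq_ltn_trans (mxrank_row_mx_le _ _)).
have Phi_rank : (\rank Phi <= 1)%N.
  rewrite -(rank_kermx_incidence_tr edges sigma_sqr proper nV_gt0 connected).
  exact/mxrankS/sub_kermxP.
have Slope_rank : (\rank Slope <= r)%N by apply/mxrankS/sub_kermxP.
by rewrite -/Phi -/Slope; lia.
Qed.

Definition basis_vertex (i : nat) : nat -> CC :=
  if i is 0 then colour_sign sigma col else fun _ => 0.

Definition basis_slope (i : nat) : nat -> CC :=
  if i is j.+1 then mx_nth B j else fun _ => 0.

Definition basis_wave (i e : nat) : R -> C :=
  harmonic k (basis_vertex i (src E e)) (basis_slope i e).

Lemma basis_slope_ker i : (\row_(e < length E) basis_slope i e) *m M = 0.
Proof.
case: i => [|j] /=.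
  by rewrite (_ : \row_e 0 = 0) ?mul0mx //; apply/rowP => e; rewrite !mxE.
case: (ltnP j r) => [j_lt | j_ge].
  rewrite (_ : \row_e mx_nth B j e = row (Ordinal j_lt) B); last first.
    by apply/rowP => e; rewrite mxE (mx_nthE B (Ordinal j_lt)) [RHS]mxE.
  have B_ker : B *m M = 0 by apply/sub_kermxP; rewrite eq_row_base.
  by rewrite -row_mul B_ker row0.
rewrite (_ : \row_e mx_nth B j e = 0) ?mul0mx //; apply/rowP => e.
by rewrite !mxE /mx_nth insubN // -leqNgt.
Qed.

Lemma basis_wave_eigen i : in_eigenspace nV E (RtoC (Rmult k k)) (basis_wave i).
Proof.
apply: harmonic_in_eigenspace => //; last exact/kirchhoff_balanced_ker/basis_slope_ker.
case: i => [|j] e /ltP e_lt /=; last exact: (esym (mulr0 sigma)).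
exact: (colour_sign_edge sigma_sqr proper e_lt).
Qed.

(* At x = 0 only the cosine wave survives; at a point where sin (k x) <> 0 the sine waves
   reduce to the rows of the basis [B]. *)
Lemma basis_wave_indep : lin_indep E r.+1 basis_wave.
Proof.
move=> c c_comb.
have c0 : c 0%N = 0 :> CC.
  have prod0 : (c 0%N : CC) * colour_sign sigma col (src E 0) = 0.
    have := c_comb 0%N 0 (elimT ltP E_gt0) (conj (Rle_refl 0) Rle_0_1).
    rewrite Csum_big big_ord_recl big1 => [|j _].
      by rewrite /basis_wave harmonic_0 CmultE addr0.
    by rewrite /basis_wave harmonic_0 CmultE mulr0.
  move/eqP: prod0.
  by rewrite mulf_eq0 (negbTE (colour_sign_neq0 col sigma_sqr _)) orbF => /eqP.
have [x1 [x1_unit sine_x1]] := exists_harmonic_sine_neq0 _ k_neq0.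
have cB : (\row_(j < r) (c j.+1 : CC)) *m B = 0.
  apply/rowP => e; rewrite !mxE.
  have : (\sum_(j < r) (c j.+1 : CC) * B j e) * harmonic k (0 : CC) (1 : CC) x1 = 0.
    have := c_comb e x1 (elimT ltP (ltn_ord e)) x1_unit.
    rewrite Csum_big big_ord_recl CmultE c0 mul0r add0r mulr_suml => sum0.
    apply: (etrans _ sum0); apply: eq_bigr => j _.
    rewrite CmultE lift0 /basis_wave /= mx_nthE.
    by rewrite [harmonic _ _ (B j e) _]harmonicE mul0r add0r mulrA.
  move/eqP; rewrite mulf_eq0 => /orP [/eqP sum0 | /eqP /sine_x1 //].
  by rewrite -[RHS]sum0; apply: eq_bigr => j _; rewrite mxE.
have /rowP c_tail : \row_(j < r) (c j.+1 : CC) = 0.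
  by apply: (row_free_inj (row_base_free (kermx M))); rewrite mul0mx.
move=> [|j] /ltP j_lt //.
by have := c_tail (Ordinal (j_lt : (j < r)%N)); rewrite !mxE.
Qed.

Lemma eigenspace_dim_harmonic :
  eigenspace_dim nV E (RtoC (Rmult k k)) (length E + 2 - nV).
Proof.
have -> : (length E + 2 - nV)%N = r.+1.
  have := vertices_le_edges_succ edges sigma_sqr proper nV_gt0 connected.
  by rewrite /r (rank_kermx_incidence edges sigma_sqr proper nV_gt0 connected); lia.
split; last exact: eigenfunctions_dependent.
by exists basis_wave; split=> [i _|]; [exact: basis_wave_eigen | exact: basis_wave_indep].
Qed.

End Eigenspace.

Lemma eigenspace_dim_of_sin_eq0 nV E (col : nat -> bool) (k : R) :
  edge_ok nV E -> (forall u w, In (u, w) E -> col u <> col w) -> connected_graph nV E ->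
  (0 < length E)%coq_nat -> k <> 0 -> sin k = 0 ->
  eigenspace_dim nV E (RtoC (Rmult k k)) (Nat.sub (Nat.add (length E) 2) nV).
Proof.
move=> edges proper [/ltP nV_gt0 connected] /ltP E_gt0 k_neq0 sin_k.
apply: (eigenspace_dim_harmonic edges proper nV_gt0 _ E_gt0 k_neq0 sin_k).
by move=> w /ltP; apply: connected; apply/ltP.
Qed.

End IncidenceSpectrum.

Theorem theorem2p3 (nV : nat) (E : list (nat * nat)) :
  simple_graph nV E -> connected_graph nV E -> bipartite_graph E ->
  (0 < length E)%nat ->
  forall n : nat, (1 <= n)%nat ->
    eigenspace_dim nV E (RtoC ((INR n)^2 * PI^2))
      (length E + 2 - nV)%nat.
Proof.
move=> [edges _] connected [col proper] E_gt0 n n_ge1.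
have k_neq0 : INR n * PI <> 0.
  by apply: Rmult_integral_contrapositive_currified; [apply: not_0_INR; lia | exact: PI_neq0].
rewrite (_ : INR n ^ 2 * PI ^ 2 = INR n * PI * (INR n * PI)); last by ring.
exact: (eigenspace_dim_of_sin_eq0 edges proper connected E_gt0 k_neq0 (sin_INR_mul_PI n)).
Qed.
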